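(* Let $X$ be a path-connected Hausdorff space and let $m,l\in X$. Then the lion has a strategy in $X$ for the starting points $m$ (man) and $l$ (lion).
   Context: For a topological space $X$ and $x\in X$, let $P_x(X)$ be the set of continuous maps $\gamma:[0,+\infty)\to X$ with $\gamma(0)=x$. For $\gamma\in P_x(X)$ and $t\ge 0$, write $\gamma_{<t}=\gamma|_{[0,t)}$ and $\gamma_{\le t}=\gamma|_{[0,t]}$. Given starting points $m$ (man) and $l$ (lion) in $X$, a strategy for the lion is a function $S:P_m(X)\to P_l(X)$ such that (i) for each $\alpha\in P_m(X)$ there exists $t\ge 0$ with $S(\alpha)(t)=\alpha(t)$; and (ii) (no-lookahead rule) whenever $\alpha,\alpha'\in P_m(X)$ and $t\ge0$ satisfy $\alpha_{<t}=\alpha'_{<t}$, then $S(\alpha)_{\le t}=S(\alpha')_{\le t}$. *)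

From HB Require Import structures.
From mathcomp Require Import all_boot all_order all_algebra.
From mathcomp Require Import all_classical all_reals topology normedtype.
Set Implicit Arguments. Unset Strict Implicit. Unset Printing Implicit Defensive.
Import Order.TTheory GRing.Theory Num.Theory numFieldNormedType.Exports.
Local Open Scope classical_set_scope.
Local Open Scope ring_scope.

Definition path_connected_space (R : realType) (X : topologicalType) : Prop :=
  forall x y : X, exists g : R -> X,
    {within (`[0, 1]%classic : set R), continuous g} /\ g 0 = x /\ g 1 = y.

(* P_x(X): continuous maps [0,+oo) -> X starting at x, represented as maps
   R -> X continuous on the subspace [0,+oo) (values at negative times are
   irrelevant). *)
Definition Pstart (R : realType) (X : topologicalType) (x : X) : set (R -> X) :=
  [set g | {within (`[0, +oo[%classic : set R), continuous g} /\ g 0 = x].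

Definition lion_strategy (R : realType) (X : topologicalType) (m l : X)
    (S : (R -> X) -> (R -> X)) : Prop :=
  (forall a, @Pstart R X m a -> @Pstart R X l (S a)) /\
  (forall a, @Pstart R X m a -> exists t : R, 0 <= t /\ S a t = a t) /\
  (forall a a', @Pstart R X m a -> @Pstart R X m a' -> forall t : R, 0 <= t ->
     (forall s : R, 0 <= s -> s < t -> a s = a' s) ->
     forall s : R, 0 <= s -> s <= t -> S a s = S a' s).

From HB Require Import structures.
From mathcomp Require Import all_boot all_order all_algebra.
From mathcomp Require Import all_classical all_reals topology normedtype.
From mathcomp Require Import lra.
Set Implicit Arguments. Unset Strict Implicit. Unset Printing Implicit Defensive.
Import Order.TTheory GRing.Theory Num.Theory numFieldNormedType.Exports.
Local Open Scope classical_set_scope.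
Local Open Scope ring_scope.

(* During [0, 1] the lion walks along a path from l to m; afterwards it
   replays the man's trajectory at double speed, standing at time t where the
   man stood at time 2t - 2, and so catches him at time 2. Since 2t - 2 < t
   before time 2, the lion only ever looks into the man's strict past, except
   at the capture instant itself; there the man's position is the left limit
   of his past positions, which determines it because X is Hausdorff. *)

Lemma continuous_comp_within (Y Z X : topologicalType) (A : set Z)
    (f : Z -> X) (h : Y -> Z) :
  {within A, continuous f} -> continuous h -> (forall y, A (h y)) ->
  continuous (f \o h).
Proof.
move=> /subspace_continuousP fA hc Ah y.
apply: cvg_comp (fA _ (Ah y)) => P /= AP.
have : nbhs y (h @^-1` (fun z => A z -> P z)) := hc y _ AP.
by apply: filterS => z /(_ (Ah z)).
Qed.

Lemma continuous_if_le (R : realType) (X : topologicalType) (c : R)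
    (f g : R -> X) :
  continuous f -> continuous g -> f c = g c ->
  continuous (fun t => if t <= c then f t else g t).
Proof.
move=> fc gc fgc x; set h := fun t => _.
have cover : `]-oo, c] `|` `[c, +oo[ = [set: R].
  apply/seteqP; split => // t _ /=; rewrite !in_itv /= andbT.
  by case: (leP t c) => tc; [left | right; apply: ltW].
have : {within [set: R], continuous h}.
  rewrite -cover; apply: withinU_continuous.
  - exact: lray_closed.
  - exact: rray_closed.
  - apply: (@subspace_eq_continuous _ _ _ f); last exact: continuous_subspaceT.
    by move=> t; rewrite inE /= in_itv /= /from_subspace /h => ->.
  - apply: (@subspace_eq_continuous _ _ _ g); last exact: continuous_subspaceT.
    move=> t; rewrite inE /= in_itv /= andbT => ct; rewrite /from_subspace /h.
    by case: ifP => // tc; have -> : t = c by apply/eqP; rewrite eq_le tc ct.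
by move=> /(_ x); rewrite /continuous_at /from_subspace nbhs_subspaceT.
Qed.

Lemma near_eq_cvg_unique (T : Type) (F : set_system T) {FF : ProperFilter F}
    (X : topologicalType) (f g : T -> X) (x y : X) :
  hausdorff_space X -> f @ F --> x -> g @ F --> y -> {near F, f =1 g} ->
  x = y.
Proof.
move=> hX fx gy fg; apply: (cvg_unique hX fx).
by apply: cvg_trans gy; apply: near_eq_cvg; apply: filterS fg.
Qed.

Section Paths.
Context {R : realType} {X : topologicalType}.

Lemma within_continuous_cvg_at_left (f : R -> X) (t : R) :
  0 < t -> {within `[0, +oo[, continuous f} -> f @ t^'- --> f t.
Proof.
move=> t0 /subspace_continuousP fc.
have t_in : `[0, +oo[%classic t by rewrite /= in_itv /= andbT ltW.
apply: cvg_trans (fc t t_in); apply: cvg_app => P /= P0t.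
have : nbhs t (fun y => `[0, +oo[%classic y -> P y) := P0t.
move=> /filterS2 /(_ (lt_nbhsr t0)); apply => y yP y0 yt.
by apply: yP; rewrite /= in_itv /= andbT ltW.
Qed.

Lemma within_continuous_eq_from_left (f g : R -> X) (t : R) :
  hausdorff_space X -> 0 < t ->
  {within `[0, +oo[, continuous f} -> {within `[0, +oo[, continuous g} ->
  (forall s, 0 <= s -> s < t -> f s = g s) -> f t = g t.
Proof.
move=> hX t0 fc gc fg.
apply: (near_eq_cvg_unique hX (within_continuous_cvg_at_left t0 fc)
  (within_continuous_cvg_at_left t0 gc)).
suff : nbhs t (fun y => y < t -> f y = g y) by [].
by apply: filterS (lt_nbhsr t0) => y y0 yt; apply: fg; rewrite ?ltW.
Qed.

End Paths.

Section Clamp.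
Context {R : realType}.

Definition clamp (a b t : R) := Num.min (Num.max t a) b.

Lemma clamp_id (a b t : R) : a <= t -> t <= b -> clamp a b t = t.
Proof. by move=> at_ tb; rewrite /clamp max_l // min_l. Qed.

Lemma clamp_ge (a b t : R) : a <= b -> a <= clamp a b t.
Proof. by move=> ab; rewrite /clamp le_min le_max lexx orbT. Qed.

Lemma clamp_le (a b t : R) : clamp a b t <= b.
Proof. by rewrite /clamp ge_min lexx orbT. Qed.

Lemma clamp_le_id (a b t : R) : a <= t -> clamp a b t <= t.
Proof. by move=> at_; rewrite /clamp max_l // ge_min lexx. Qed.

Lemma continuous_clamp (a b : R) : continuous (clamp a b).
Proof.
move=> x; apply: (@continuous_min _ _ (fun t => Num.max t a) (fun=> b)).
  by apply: (@continuous_max _ _ id (fun=> a)); [exact: cvg_id | exact: cvg_cst].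
exact: cvg_cst.
Qed.

End Clamp.

Section Pursuit.
Context {R : realType} {X : topologicalType}.

Definition delay (t : R) := clamp 0 2 (2 * t - 2).

Lemma continuous_delay : continuous delay.
Proof.
move=> x; apply: (@continuous_comp R R R (fun t => 2 * t - 2) (clamp 0 2)).
  by apply: cvgB; [apply: cvgM; [exact: cvg_cst | exact: cvg_id] | exact: cvg_cst].
exact: continuous_clamp.
Qed.

Lemma delay_ge0 (t : R) : 0 <= delay t.
Proof. exact: clamp_ge. Qed.

Lemma delay_le (t : R) : 1 <= t -> delay t <= t.
Proof.
move=> t1; have := @clamp_le _ 0 2 (2 * t - 2).
have := @clamp_le_id _ 0 2 (2 * t - 2); rewrite /delay; lra.
Qed.

Definition pursuit (g a : R -> X) (t : R) :=
  if t <= 1 then g (clamp 0 1 t) else a (delay t).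

Variable g : R -> X.

Lemma pursuit_Pstart (m l : X) (a : R -> X) :
  {within `[0, 1], continuous g} -> g 0 = l -> g 1 = m ->
  Pstart m a -> Pstart l (pursuit g a).
Proof.
move=> gc g0 g1 [ac a0]; split; last by rewrite /pursuit ler01 clamp_id ?lexx ?ler01.
apply: continuous_subspaceT; apply: continuous_if_le.
- apply: continuous_comp_within gc (@continuous_clamp _ 0 1) _ => t.
  by rewrite /= in_itv /= clamp_ge ?ler01 // clamp_le.
- apply: continuous_comp_within ac continuous_delay _ => t.
  by rewrite /= in_itv /= andbT delay_ge0.
- have delay1 : delay 1 = 0 :> R by rewrite /delay clamp_id; lra.
  by rewrite /= delay1 clamp_id ?ler01 // g1 a0.
Qed.

Lemma pursuit_catches (a : R -> X) : pursuit g a 2 = a 2.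
Proof.
rewrite /pursuit.
have -> : (2 <= 1 :> R) = false by apply/negbTE; rewrite -ltNge; lra.
by have -> : delay 2 = 2 :> R by rewrite /delay clamp_id; lra.
Qed.

Lemma pursuit_no_lookahead (a a' : R -> X) (t : R) :
  hausdorff_space X ->
  {within `[0, +oo[, continuous a} -> {within `[0, +oo[, continuous a'} ->
  (forall s, 0 <= s -> s < t -> a s = a' s) ->
  forall s, s <= t -> pursuit g a s = pursuit g a' s.
Proof.
move=> hX ac a'c aa' s st; rewrite /pursuit; case: ifPn => // s1.
have s_gt1 : 1 < s by rewrite ltNge.
have [lt_t | ge_t] := ltP (delay s) t; first exact: aa' (delay_ge0 s) lt_t.
have -> : delay s = t by have := delay_le (ltW s_gt1); lra.
by apply: within_continuous_eq_from_left => //; lra.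
Qed.

End Pursuit.

Theorem mainTheorem1 (R : realType) (X : topologicalType) :
  hausdorff_space X -> path_connected_space R X ->
  forall m l : X, exists S : (R -> X) -> (R -> X), lion_strategy m l S.
Proof.
move=> hX pc m l; have [g [gc [g0 g1]]] := pc l m.
exists (pursuit g); split; [|split].
- by move=> a; apply: pursuit_Pstart.
- by move=> a _; exists 2; split; [lra | exact: pursuit_catches].
- move=> a a' Pa Pa' t _ aa' s _; exact: pursuit_no_lookahead Pa.1 Pa'.1 aa' s.
Qed.
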